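(* Let $f$ be a bicritical rational map of degree $d$ and let $p$ be a prime number not dividing $d$. Then for every $k\in\mathbb{N}$, the group $\mathrm{Deck}(f^k)$ has no element of order $p$.
   Context: A rational map of degree $d\ge2$ is bicritical if it has exactly two critical points. $\mathrm{Deck}(F)=\{\tau \text{ Möbius} : F\circ\tau=F\}$. $f^k$ is the $k$-th iterate. *)

From HB Require Import structures.
From mathcomp Require Import all_boot all_order all_algebra.
From mathcomp.real_closed Require Import complex.
From mathcomp Require Import reals.
Set Implicit Arguments. Unset Strict Implicit. Unset Printing Implicit Defensive.
Import Order.TTheory GRing.Theory Num.Theory.
Local Open Scope ring_scope.
Local Open Scope complex_scope.

(* Riemann sphere: option C, with None standing for the point at infinity. *)

Section RationalMaps.
Variable C : fieldType.

(* degree of the rational map P/Q (P, Q coprime) *)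
Definition rdeg (P Q : {poly C}) : nat := (maxn (size P) (size Q)).-1.

Definition rat_eval (P Q : {poly C}) (z : option C) : option C :=
  match z with
  | Some z => if Q.[z] == 0 then None else Some (P.[z] / Q.[z])
  | None => let d := rdeg P Q in
            if Q`_d == 0 then None else Some (P`_d / Q`_d)
  end.

(* polynomial whose roots (with multiplicity) are the finite points of the
   fiber over w *)
Definition fibpoly (P Q : {poly C}) (w : option C) : {poly C} :=
  match w with Some w => P - w%:P * Q | None => Q end.

Definition locdeg (P Q : {poly C}) (z : option C) : nat :=
  let F := fibpoly P Q (rat_eval P Q z) in
  match z with
  | Some z => mup z F
  | None => rdeg P Q - (size F).-1
  end.

Definition critical_point (P Q : {poly C}) (z : option C) : Prop :=
  (2 <= locdeg P Q z)%N.

Definition bicritical (P Q : {poly C}) : Prop :=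
  exists c1 c2 : option C, c1 <> c2 /\
    forall z, critical_point P Q z <-> (z = c1 \/ z = c2).

Definition is_mobius (t : option C -> option C) : Prop :=
  exists a b c e : C, a * e - b * c != 0 /\
    t =1 rat_eval (a *: 'X + b%:P) (c *: 'X + e%:P).

Definition Deck (F : option C -> option C) (t : option C -> option C) : Prop :=
  is_mobius t /\ F \o t =1 F.

Definition has_order (t : option C -> option C) (n : nat) : Prop :=
  (0 < n)%N /\ iter n t =1 id /\
  forall m, (0 < m < n)%N -> ~ (iter m t =1 id).

End RationalMaps.

From HB Require Import structures.
From mathcomp Require Import all_boot all_order all_algebra.
From mathcomp.real_closed Require Import complex.
From mathcomp Require Import reals.
From mathcomp Require Import all_fingroup all_solvable.
From mathcomp Require Import zify ring.
Set Implicit Arguments. Unset Strict Implicit. Unset Printing Implicit Defensive.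
Import GRing.Theory Num.Theory.
Local Open Scope ring_scope.

(* Take w outside the forward orbits (up to time k) of the critical points
   and outside the f^k-image of the finitely many fixed points of a
   non-identity Moebius map t.  The fiber of f^k over w then consists of
   exactly d^k distinct points; a deck transformation t of f^k permutes this
   fiber without fixed points.  If t has prime order p, all its orbits on the
   fiber have size p, so p divides d^k, hence d. *)

Lemma closed_poly_roots (C : closedFieldType) (F : {poly C}) : F != 0 ->
  exists s : seq C, [/\ forall z, root F z = (z \in s),
     size F = (size s).+1 & forall z, mup z F = count_mem z s].
Proof.
move=> F0; have [s ->] := closed_field_poly_normal F.
have lc0 : lead_coef F != 0 by rewrite lead_coef_eq0.
exists s; split=> [z||z].
- by rewrite rootZ // root_prod_XsubC.
- by rewrite size_scale // size_prod_XsubC.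
- by rewrite -mul_polyC mupMr ?mu_prod_XsubC // rootC.
Qed.

Definition fiber_card (T T' : eqType) (g : T -> T') (w : T') (n : nat) : Prop :=
  exists s : seq T, [/\ uniq s, size s = n & forall x, (x \in s) = (g x == w)].

Section Fiber.
Variable C : closedFieldType.
Variables P Q : {poly C}.
Hypothesis PQ_coprime : coprimep P Q.
Hypothesis rdeg_gt1 : (2 <= rdeg P Q)%N.

Let d := rdeg P Q.

Lemma rdegSE : d.+1 = maxn (size P) (size Q).
Proof. by rewrite /d /rdeg prednK //; move: rdeg_gt1; rewrite /rdeg; case: maxn. Qed.

Lemma size_fibpoly w : (size (fibpoly P Q w) <= d.+1)%N.
Proof.
rewrite rdegSE; case: w => [v|] /=; last exact: leq_maxr.
apply: leq_trans (size_polyD _ _) _; rewrite size_polyN geq_max leq_maxl /=.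
by rewrite mul_polyC (leq_trans (size_scale_leq _ _)) // leq_maxr.
Qed.

Lemma fibpoly_neq0 w : fibpoly P Q w != 0.
Proof.
have Q_neq0 : Q != 0.
  apply/eqP => Q0; move: PQ_coprime rdeg_gt1; rewrite Q0 coprimep0.
  by move=> /eqp_size; rewrite size_poly1 /rdeg size_poly0 => ->.
case: w => [v|] //=; apply/eqP => /eqP; rewrite subr_eq0 => /eqP PE.
have := rdegSE.
rewrite PE mul_polyC (maxn_idPr (size_scale_leq v Q)) => sQ.
have /closed_rootP [z Qz] : size Q != 1%N.
  by rewrite -sQ; move: rdeg_gt1; rewrite -/d; lia.
have := coprimep_root PQ_coprime (x := z).
by rewrite /root PE hornerE (eqP Qz) mulr0 eqxx => /(_ isT).
Qed.

(* [None] lies over [w] exactly when [fibpoly P Q w] has degree below [d];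
   the size of the drop is the local degree at [None]. *)
Lemma coef_fibpoly_rdeg_eq0 w :
  ((fibpoly P Q w)`_d == 0) = (rat_eval P Q None == w).
Proof.
have PQ_top : P`_d != 0 \/ Q`_d != 0.
  have := rdegSE; rewrite /maxn; case: ltnP => _ e; [right | left];
  by rewrite -[d]/(d.+1.-1) e -lead_coefE lead_coef_eq0 -size_poly_eq0 -e.
case: w => [v|] /=; last by case: eqP.
rewrite coefB coefCM -/d.
have [Q0|Q0] := eqVneq Q`_d 0.
  by rewrite Q0 mulr0 subr0; case: PQ_top => [/negPf ->|]; rewrite ?Q0 ?eqxx.
by rewrite subr_eq0; apply/eqP/eqP => [->|[<-]]; rewrite ?mulfK ?mulfVK.
Qed.

Lemma root_fibpoly w z : root (fibpoly P Q w) z = (rat_eval P Q (Some z) == w).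
Proof.
rewrite /root; case: w => [v|] /=; last by case: (Q.[z] == 0).
rewrite !hornerE; have [Q0|Q0] := eqVneq Q.[z] 0.
  rewrite Q0 mulr0 subr0 /=; apply/negP => /eqP P0.
  by have := coprimep_root PQ_coprime (x := z); rewrite /root P0 Q0 eqxx => /(_ isT).
by rewrite subr_eq0 /=; apply/eqP/eqP => [->|[<-]]; rewrite ?mulfK ?mulfVK.
Qed.

Lemma regular_fiber w :
  (forall x, rat_eval P Q x = w -> ~ critical_point P Q x) ->
  fiber_card (rat_eval P Q) w d.
Proof.
move=> wreg; set F := fibpoly P Q w.
have [s [rootF sizeF mupF]] := closed_poly_roots (fibpoly_neq0 w).
have us : uniq s.
  apply: count_mem_uniq => z; rewrite -mupF.
  have [zs|zs] := boolP (z \in s); last by rewrite mupNroot ?rootF.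
  have Fz : rat_eval P Q (Some z) = w by apply/eqP; rewrite -root_fibpoly rootF.
  have : (0 < mup z F)%N by rewrite mupF -has_count has_pred1.
  by have := wreg _ Fz; rewrite /critical_point /locdeg Fz -/F; lia.
have memS z : (Some z \in map Some s) = (z \in s) by rewrite mem_map // => ? ? [].
have uS : uniq (map Some s) by rewrite map_inj_uniq // => ? ? [].
have Fd := coef_fibpoly_rdeg_eq0 w; rewrite -/F in Fd.
have sF := size_fibpoly w; rewrite -/F sizeF in sF.
have [Fi|Fi] := eqVneq (rat_eval P Q None) w.
- exists (None :: map Some s); split.
  + by rewrite /= uS andbT; apply/mapP => -[].
  + have := wreg _ Fi; rewrite /critical_point /locdeg Fi -/F -/d sizeF /=.
    have : (size s < d)%N.
      have : F`_d == 0 by rewrite Fd Fi.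
      apply: contraTT; rewrite -leqNgt => ds.
      have -> : d = (size F).-1 by rewrite sizeF; lia.
      by rewrite -lead_coefE lead_coef_eq0 fibpoly_neq0.
    by rewrite size_map; lia.
  + case=> [z|]; last by rewrite Fi eqxx mem_head.
    by rewrite inE /= memS -rootF root_fibpoly.
- exists (map Some s); split => //.
  + have : (d < size F)%N.
      have : F`_d != 0 by rewrite Fd.
      by apply: contraNT; rewrite -leqNgt => /(nth_default 0) ->.
    by rewrite size_map sizeF; lia.
  + case=> [z|]; first by rewrite memS -rootF root_fibpoly.
    by rewrite (negPf Fi); apply/mapP => -[].
Qed.

Lemma fiber_card_off_critical_values (crit : seq (option C)) :
    (forall z, critical_point P Q z -> z \in crit) ->
  forall w, (forall c, c \in crit -> rat_eval P Q c != w) ->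
  fiber_card (rat_eval P Q) w d.
Proof.
move=> critP w wreg; apply: regular_fiber => x fx /critP xcrit.
by have := wreg x xcrit; rewrite fx eqxx.
Qed.

End Fiber.

Lemma cat_fibers (T T' : eqType) (g : T -> T') (n : nat) (l : seq T') :
    uniq l -> (forall v, v \in l -> fiber_card g v n) ->
  exists s : seq T,
    [/\ uniq s, size s = (n * size l)%N & forall x, (x \in s) = (g x \in l)].
Proof.
elim: l => [|v l IHl] /=; first by exists [::]; rewrite muln0.
move=> /andP[vNl ul] fibs.
have [s1 [u1 size1 mem1]] := fibs v (mem_head _ _).
have [|s2 [u2 size2 mem2]] := IHl ul => [u ul'|].
  by apply: fibs; rewrite inE ul' orbT.
exists (s1 ++ s2); split.
- rewrite cat_uniq u1 u2 andbT; apply/hasPn => x; rewrite mem2 /= mem1.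
  by apply: contraL => /eqP ->.
- by rewrite size_cat size1 size2 mulnS.
- by move=> x; rewrite mem_cat mem1 mem2 inE.
Qed.

Section IteratedFiber.
Variables (T : eqType) (f : T -> T) (d : nat) (crit : seq T).
Hypothesis fiber_off_crit :
  forall w, (forall c, c \in crit -> f c != w) -> fiber_card f w d.

Lemma iter_fiber_card k w :
    (forall c j, c \in crit -> (0 < j <= k)%N -> iter j f c != w) ->
  fiber_card (iter k f) w (d ^ k).
Proof.
elim: k w => [|k IHk] w wreg; first by exists [:: w]; split=> // x; rewrite inE.
have [l [ul size_l mem_l]] := fiber_off_crit (fun c hc => wreg c 1%N hc isT).
have fibs v : v \in l -> fiber_card (iter k f) v (d ^ k).
  rewrite mem_l => /eqP fv; apply: IHk => c j hc hj; apply/eqP => cv.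
  have hjS : (0 < j.+1 <= k.+1)%N by lia.
  by have /eqP := wreg c j.+1 hc hjS; rewrite iterS cv.
have [s [us size_s mem_s]] := cat_fibers ul fibs.
exists s; split=> //; first by rewrite size_s size_l expnSr.
by move=> x; rewrite mem_s mem_l iterS.
Qed.

End IteratedFiber.

(* The p-group generated by [t] acts on [S] without fixed points, so
   [size S = 0 %[mod p]] by [pgroup_fix_mod]. *)
Lemma prime_dvd_size_fixfree (T : choiceType) (t : T -> T) (p : nat) (S : seq T) :
    prime p -> iter p t =1 id -> uniq S ->
    (forall x, x \in S -> t x \in S) -> (forall x, x \in S -> t x != x) ->
  (p %| size S)%N.
Proof.
move=> p_pr tp uS tS tNfix.
have t_inj : injective t.
  move=> x y e; rewrite -[x]tp -[y]tp.
  by case: p p_pr tp => // n _ _; rewrite !iterSr e.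
pose tS' (u : seq_sub S) : seq_sub S := SeqSub (tS _ (ssvalP u)).
have tS'_inj : injective tS'.
  by move=> u v /(congr1 (@ssval _ S)) /t_inj /val_inj.
pose g := perm tS'_inj.
have gX n u : ssval ((g ^+ n)%g u) = iter n t (ssval u).
  elim: n u => [|n IHn] u; first by rewrite expg0 perm1.
  by rewrite expgSr permM permE /= IHn.
have gp : (g ^+ p)%g = 1%g by apply/permP => u; apply: val_inj; rewrite perm1 /= gX tp.
have pg : pgroup p <[g]>%g.
  by apply: pnat_dvd (pnat_id p_pr); rewrite order_dvdn gp.
have g_acts : [acts <[g]>%g, on [set: seq_sub S] | 'P].
  by apply/actsP => ? _ ?; rewrite !inE.
have := pgroup_fix_mod pg g_acts.
have -> : ('Fix_([set: seq_sub S] | 'P)(<[g]>))%g = set0.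
  apply/setP => u; rewrite in_set0; apply/negP => /setIP[_ /afixP gu].
  have := tNfix _ (ssvalP u); have := gX 1%N u; rewrite expg1 /=.
  by rewrite -[X in ssval X]/(aperm u g) gu ?cycle_id // => <-; rewrite eqxx.
by rewrite cards0 cardsT card_seq_sub // mod0n => /eqP.
Qed.

Lemma mobius_fixpoints (C : closedFieldType) (t : option C -> option C) :
    is_mobius t -> ~ t =1 id ->
  exists sH : seq C, forall z, t (Some z) = Some z -> z \in sH.
Proof.
move=> [a [b [c [e [det tE]]]]] tNid.
pose H : {poly C} := c%:P * 'X^2 + (e - a)%:P * 'X - b%:P.
have [H0|H0] := eqVneq H 0.
  exfalso; apply: tNid.
  have := congr1 (fun q : {poly C} => q`_2) H0.
  have := congr1 (fun q : {poly C} => q`_1) H0.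
  have := congr1 (fun q : {poly C} => q`_0) H0.
  rewrite /H /= !(coefD, coefB, coefCM, coefXn, coefX, coefN, coefC, coef0) /=.
  rewrite !(mulr1, mulr0, addr0, add0r, oppr0, subr0) => /eqP.
  rewrite oppr_eq0 => /eqP b0 /eqP; rewrite subr_eq0 => /eqP ea c0.
  subst c b e; move: det; rewrite mulr0 subr0 mulf_eq0 orbb => a0.
  case=> [z|]; rewrite tE /= !hornerE ?(negPf a0) /=.
  - by rewrite mulrC mulKf.
  - by rewrite scale0r add0r /rdeg size_scale // size_polyX size_polyC a0 coefC /= eqxx.
have [sH [rootH _ _]] := closed_poly_roots H0.
exists sH => z; rewrite tE /= !hornerE -rootH /root.
case: eqP => // /eqP den0 [fixz].
have := divfK den0 (a * z + b); rewrite fixz => numE.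
apply/eqP; transitivity (z * (c * z + e) - (a * z + b)).
  by rewrite /H !(hornerD, hornerN, hornerCM, hornerC, hornerXn, hornerX); ring.
by rewrite -numE subrr.
Qed.

Lemma exists_notin_option_num (C : numDomainType) (B : seq (option C)) :
  exists w, w \notin B.
Proof.
pose s := [seq Some (n%:R : C) | n <- iota 0 (size B).+1].
have us : uniq s.
  by rewrite map_inj_uniq ?iota_uniq // => m n [] /eqP; rewrite eqr_nat => /eqP.
have : ~~ all (mem B) s.
  apply: contraT; rewrite negbK => /allP sB.
  by have := uniq_leq_size us sB; rewrite size_map size_iota ltnn.
by case/allPn => w _ wB; exists w.
Qed.

Theorem mainTheorem6 (R : realType) (P Q : {poly R[i]}) (p : nat) :
  coprimep P Q ->
  (2 <= rdeg P Q)%N ->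
  bicritical P Q ->
  prime p ->
  ~~ (p %| rdeg P Q)%N ->
  forall k : nat, ~ (exists t : option R[i] -> option R[i],
                       Deck (iter k (rat_eval P Q)) t /\ has_order t p).
Proof.
move=> PQ_coprime rdeg_gt1 [c1 [c2 [_ critE]]] p_pr pNd k.
move=> [t [[t_mob deck] [_ [tp tmin]]]].
set f := rat_eval P Q; set crit := [:: c1; c2].
have t_nid : ~ t =1 id by move=> t_id; apply: (tmin 1%N) t_id; rewrite prime_gt1.
have [sH fixH] := mobius_fixpoints t_mob t_nid.
pose bad := [seq iter j.+1 f c | c <- crit, j <- iota 0 k] ++
            [seq iter k f x | x <- None :: map Some sH].
have [w wNbad] := exists_notin_option_num bad.
have critP z : critical_point P Q z -> z \in crit.
  by case/critE => ->; rewrite !inE eqxx ?orbT.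
have fiber_f := fiber_card_off_critical_values PQ_coprime rdeg_gt1 critP.
have [|S [uS sizeS memS]] := iter_fiber_card fiber_f (k := k) (w := w).
  move=> c j c_crit /andP[j_gt0 jk]; apply: contraNneq wNbad => <-.
  rewrite mem_cat; apply/orP; left; apply/allpairsP; exists (c, j.-1).
  by rewrite mem_iota prednK //=; split=> //; lia.
have : (p %| size S)%N.
  apply: (prime_dvd_size_fixfree p_pr tp uS) => [x|x].
  - by rewrite !memS => /eqP <-; rewrite -[X in _ == X]deck.
  - rewrite memS => /eqP fx; apply: contraNneq wNbad => tx.
    rewrite mem_cat -fx map_f ?orbT //.
    by case: x tx {fx} => [z /fixH zH|_]; rewrite !inE ?mem_map // => ? ? [].
by rewrite sizeS Euclid_dvdX // (negPf pNd).
Qed.
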